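(* Consider a nonempty configuration with largest nonempty level $\lambda$. Define $Y_\lambda=\sum_{r\ge0}SS_{\lambda-r}2^{-r+1-b}$, and for $r=0,1,\dots,b$ let $H_r=\lfloor SS_{\lambda-r}/2^b\rfloor$ and $E=\sum_{r=0}^b\lfloor H_r2^{-r+1}\rfloor$. Then $E\le Y_\lambda<E+b+7$, and $Y_\lambda\ge 1$.
   Context: Fix an integer $b\ge 2$. There is a set $\mathcal L$ of $N$ levels, which are consecutive integers. Each level $\ell$ holds a finite (possibly empty) multiset of normalized significands, each an integer in $[2^{b-1},2^b)$. Let $z$ be the total number of stored significands over all levels; assume $z<2^b$ (hence every $SS_\ell<2^{2b}$). For each level, $SS_\ell$ is the sum of its significands (so $SS_\ell=0$ iff the level is empty); set $SS_\ell=0$ for integers $\ell\notin\mathcal L$. The configuration is nonempty if $z\ge1$. *)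

From mathcomp Require Import all_boot all_order all_algebra.
Set Implicit Arguments. Unset Strict Implicit. Unset Printing Implicit Defensive.
Import Order.TTheory GRing.Theory Num.Theory.

(* A configuration assigns to each integer level l a finite multiset
   (represented as a list) of natural-number significands. *)
Definition SS (S : int -> seq nat) (l : int) : nat := sumn (S l).

Definition zcount (S : int -> seq nat) (lo : int) (N : nat) : nat :=
  \sum_(i < N) size (S (lo + i%:Z)%R).

Local Open Scope ring_scope.

(* Y_lambda = sum_{r >= 0} SS_{lambda - r} 2^{-r+1-b}; the terms with
   lambda - r < lo vanish, and lambda <= lo + N - 1, so r < N suffices. *)
Definition Ysum (S : int -> seq nat) (b N : nat) (lam : int) : rat :=
  \sum_(r < N) (SS S (lam - r%:Z))%:R * (2%:R : rat) ^ (1 - r%:Z - b%:Z).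

Definition Hr (S : int -> seq nat) (b : nat) (lam : int) (r : nat) : nat :=
  (SS S (lam - r%:Z) %/ 2 ^ b)%N.

Definition Esum (S : int -> seq nat) (b : nat) (lam : int) : int :=
  \sum_(r < b.+1) Num.floor ((Hr S b lam r)%:R * (2%:R : rat) ^ (1 - r%:Z)).

From mathcomp Require Import all_boot all_order all_algebra.
From mathcomp Require Import zify ring lra.
Import Order.TTheory GRing.Theory Num.Theory.
Local Open Scope ring_scope.

(* For r <= b, write SS_{lam-r} = H_r 2^b + rem with rem < 2^b; the r-th term
   of Y is then H_r 2^(1-r) plus a remainder below 2^(1-r), so it exceeds the
   r-th term of E by less than 1 + 2^(1-r); summed over r <= b this is less
   than b + 1 + 4.  For r > b the bound SS < 2^(2b), which follows from
   z < 2^b, makes the r-th term of Y smaller than 2^(b+1-r), and these terms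
   add up to at most 2.  Finally the term r = 0 alone is at least
   2^(b-1) 2^(1-b) = 1, as lam is nonempty and significands are normalized. *)

Lemma sumn_leq_size_mul (s : seq nat) (K : nat) :
  (forall x, x \in s -> (x < K)%N) -> (sumn s <= size s * K)%N.
Proof.
elim: s => [|x s IHs] //= sK.
have xK : (x < K)%N by apply: sK; rewrite inE eqxx.
have : (sumn s <= size s * K)%N by apply: IHs => y ys; apply: sK; rewrite inE ys orbT.
lia.
Qed.

Lemma mem_leq_sumn (s : seq nat) (x : nat) : x \in s -> (x <= sumn s)%N.
Proof.
elim: s => [|y s IHs] //=; rewrite inE => /predU1P[-> | /IHs]; first exact: leq_addr.
by move/leq_trans; apply; apply: leq_addl.
Qed.

Lemma floor_divn_scale_bounds (R : archiRealFieldType) (s d : nat) (q : R) :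
  (0 < d)%N -> 0 < q ->
  (Num.floor ((s %/ d)%:R * (d%:R * q)))%:~R <= s%:R * q <
    (Num.floor ((s %/ d)%:R * (d%:R * q)))%:~R + 1 + d%:R * q.
Proof.
move=> d_gt0 q_gt0; set fl := (Num.floor _)%:~R.
have -> : s%:R * q = (s %/ d)%:R * (d%:R * q) + (s %% d)%:R * q.
  by rewrite {1}(divn_eq s d) natrD natrM mulrDl mulrA.
have rem_ge0 : 0 <= (s %% d)%:R * q by rewrite mulr_ge0 // ltW.
have rem_lt : (s %% d)%:R * q < d%:R * q by rewrite ltr_pM2r // ltr_nat ltn_pmod.
have fl_le := floor_le ((s %/ d)%:R * (d%:R * q)).
have fl_gt := floorD1_gt ((s %/ d)%:R * (d%:R * q)).
rewrite intrD -/fl in fl_gt.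
by rewrite (le_trans fl_le) ?lerDl //= ltrD.
Qed.

Lemma sum_exp2z_le (R : numFieldType) (k : int) (m n : nat) :
  \sum_(m <= r < n) (2%:R : R) ^ (k - r%:Z) <= 2%:R ^ (k + 1 - m%:Z).
Proof.
have [mn | nm] := leqP m n; last by rewrite big_geq ?exprz_ge0 // ltnW.
pose f (r : nat) := - (2%:R : R) ^ (k + 1 - r%:Z).
have step r : (2%:R : R) ^ (k - r%:Z) = f r.+1 - f r.
  rewrite /f opprK.
  have -> : k + 1 - r.+1%:Z = k - r%:Z by lia.
  have -> : k + 1 - r%:Z = (k - r%:Z) + 1%:Z by lia.
  by rewrite (expfzDr (k - r%:Z)) ?pnatr_eq0 // expr1z mulr_natr mulr2n addKr.
rewrite (eq_bigr _ (fun r _ => step r)) telescope_sumr // /f opprK.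
by rewrite gerDr oppr_le0 exprz_ge0.
Qed.

Section Configuration.

Variables (b : nat) (lo : int) (N : nat) (S : int -> seq nat).
Hypothesis S_out : forall l : int, ~ (lo <= l < lo + N%:Z) -> S l = [::].
Hypothesis S_norm : forall (l : int) (x : nat), x \in S l -> (2 ^ b.-1 <= x < 2 ^ b)%N.
Hypothesis zcount_lt : (zcount S lo N < 2 ^ b)%N.

Lemma size_leq_zcount (l : int) : (size (S l) <= zcount S lo N)%N.
Proof.
have [/andP[lo_l l_hi] | l_out] := boolP (lo <= l < lo + N%:Z); last first.
  by rewrite S_out //; apply/negP.
have i_lt : (`|l - lo| < N)%N by rewrite -ltz_nat gez0_abs ?subr_ge0 // ltrBlDl.
have lo_shift : lo + (`|l - lo|%N)%:Z = l by rewrite gez0_abs ?subr_ge0 //; ring.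
rewrite /zcount (bigD1 (Ordinal i_lt)) //=.
by apply: leq_trans (leq_addr _ _); rewrite lo_shift.
Qed.

Lemma SS_lt_exp2_sq (l : int) : (SS S l < 2 ^ b * 2 ^ b)%N.
Proof.
apply: leq_ltn_trans (@sumn_leq_size_mul (S l) (2 ^ b) _) _.
  by move=> x /S_norm /andP[].
by rewrite ltn_mul2r expn_gt0 /= (leq_ltn_trans (size_leq_zcount l)).
Qed.

Lemma SS_nonempty_ge (l : int) : S l != [::] -> (2 ^ b.-1 <= SS S l)%N.
Proof.
rewrite /SS; case: (S l) (@S_norm l) => [|x s] // xs_norm _.
have /andP[x_ge _] := xs_norm x (mem_head x s).
apply: leq_trans x_ge _; exact: mem_leq_sumn (mem_head x s).
Qed.

Variable lam : int.

Definition Yterm (r : nat) : rat :=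
  (SS S (lam - r%:Z))%:R * 2%:R ^ (1 - r%:Z - b%:Z).

Definition Eterm (r : nat) : rat :=
  (Num.floor ((Hr S b lam r)%:R * (2%:R : rat) ^ (1 - r%:Z)))%:~R.

Lemma Yterm_ge0 (r : nat) : 0 <= Yterm r.
Proof. by rewrite mulr_ge0 ?exprz_ge0. Qed.

Lemma Eterm_le_Yterm_lt (r : nat) :
  Eterm r <= Yterm r < Eterm r + 1 + 2%:R ^ (1 - r%:Z).
Proof.
rewrite /Eterm /Yterm /Hr.
have -> : (2%:R : rat) ^ (1 - r%:Z) = (2 ^ b)%N%:R * 2%:R ^ (1 - r%:Z - b%:Z).
  by rewrite natrX exprnP -expfzDr ?pnatr_eq0 //; congr (_ ^ _); ring.
by apply: floor_divn_scale_bounds; rewrite ?expn_gt0 ?exprz_gt0.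
Qed.

Lemma Yterm_lt (r : nat) : Yterm r < 2%:R ^ (b%:Z + 1 - r%:Z).
Proof.
have -> : (2%:R : rat) ^ (b%:Z + 1 - r%:Z) =
    (2 ^ b * 2 ^ b)%N%:R * 2%:R ^ (1 - r%:Z - b%:Z).
  by rewrite -expnD natrX exprnP -expfzDr ?pnatr_eq0 // PoszD; congr (_ ^ _); ring.
by rewrite ltr_pM2r ?exprz_gt0 // ltr_nat SS_lt_exp2_sq.
Qed.

Lemma Yterm0_ge1 : S lam != [::] -> 1 <= Yterm 0.
Proof.
move=> /SS_nonempty_ge; rewrite -(ler_nat rat) natrX /Yterm !subr0 => SS_ge.
apply: le_trans (ler_wpM2r (exprz_ge0 _ (ler0n rat 2)) SS_ge).
rewrite exprnP -expfzDr ?pnatr_eq0 //.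
have -> : (b.-1)%:Z + (1 - b%:Z) = (b == 0%N)%:Z.
  by case: (b) => [|b'] /=; rewrite ?subr0 // -[b'.+1]addn1 PoszD; ring.
by rewrite -exprnP exprn_ege1 // ler1n.
Qed.

Lemma Yterm0_le_head : Yterm 0 <= \sum_(0 <= r < b.+1) Yterm r.
Proof. by rewrite big_nat_recl // lerDl sumr_ge0 // => r _; apply: Yterm_ge0. Qed.

Lemma head_Ysum_bounds :
  (Esum S b lam)%:~R <= \sum_(0 <= r < b.+1) Yterm r < (Esum S b lam)%:~R + b%:R + 5.
Proof.
have -> : (Esum S b lam)%:~R = \sum_(0 <= r < b.+1) Eterm r.
  by rewrite /Esum rmorph_sum big_mkord.
apply/andP; split.
  by apply: ler_sum => r _; case/andP: (Eterm_le_Yterm_lt r).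
apply: (@lt_le_trans _ _ (\sum_(0 <= r < b.+1) (Eterm r + 1 + 2%:R ^ (1 - r%:Z)))).
  by apply: ltr_sum => // r _; case/andP: (Eterm_le_Yterm_lt r).
have := sum_exp2z_le rat 1 0 b.+1.
rewrite !big_split /= sumr_const_nat subn0 -mulr_natl mulr1 -natr1.
have -> : (2%:R : rat) ^ (1 + 1 - 0%:Z) = 4%:R by rewrite -exprnP.
lra.
Qed.

Lemma tail_Ysum_le (M : nat) : \sum_(b.+1 <= r < M) Yterm r <= 2%:R.
Proof.
have := sum_exp2z_le rat (b%:Z + 1) b.+1 M.
have -> : b%:Z + 1 + 1 - b.+1%:Z = 1 by rewrite -[b.+1]addn1 PoszD; ring.
rewrite expr1z; apply: le_trans.
by apply: ler_sum => r _; apply/ltW/Yterm_lt.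
Qed.

Hypothesis lam_lt : lam < lo + N%:Z.

Lemma Ysum_split :
  Ysum S b N lam =
  \sum_(0 <= r < b.+1) Yterm r + \sum_(b.+1 <= r < maxn N b.+1) Yterm r.
Proof.
have -> : Ysum S b N lam = \sum_(0 <= r < N) Yterm r by rewrite big_mkord.
rewrite -big_cat_nat ?leq_maxr // (@big_cat_nat _ _ _ N 0 (maxn N b.+1)) ?leq_maxl //.
rewrite [X in _ = _ + X]big1_seq ?addr0 // => r /andP[_]; rewrite mem_index_iota.
case/andP=> N_le _; rewrite /Yterm /SS S_out ?mul0r // => /andP[+ _].
rewrite lerBrDr => /le_lt_trans/(_ lam_lt).
by rewrite ltrD2l ltz_nat ltnNge N_le.
Qed.

End Configuration.

Theorem mainTheorem8 (b : nat) (lo : int) (N : nat) (S : int -> seq nat)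
  (lam : int) :
  (2 <= b)%N ->
  (forall l : int, ~ (lo <= l < lo + N%:Z) -> S l = [::]) ->
  (forall (l : int) (x : nat), x \in S l -> (2 ^ b.-1 <= x < 2 ^ b)%N) ->
  (zcount S lo N < 2 ^ b)%N ->
  (1 <= zcount S lo N)%N ->
  (lo <= lam < lo + N%:Z) -> S lam != [::] ->
  (forall l : int, lam < l -> S l = [::]) ->
  let Y := Ysum S b N lam in
  let E := Esum S b lam in
  [/\ (E%:~R : rat) <= Y, Y < (E + b%:Z + 7)%:~R & 1 <= Y].
Proof.
move=> _ S_out S_norm zcount_lt _ /andP[_ lam_lt] lam_ne _ Y E.
rewrite /Y (Ysum_split b lo N S S_out lam lam_lt) !intrD.
have /andP[head_ge head_lt] := head_Ysum_bounds b S lam.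
have tail_ge0 : 0 <= \sum_(b.+1 <= r < maxn N b.+1) Yterm b S lam r.
  by apply: sumr_ge0 => r _; apply: Yterm_ge0.
have tail_le := tail_Ysum_le b lo N S S_out S_norm zcount_lt lam (maxn N b.+1).
have Y0_ge1 := Yterm0_ge1 b S S_norm lam lam_ne.
have Y0_le := Yterm0_le_head b S lam.
split; lra.
Qed.
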